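(* Let $n\geq 1$ and let $G_n$ be the random labelled graph described in the context, with $i^\star$ the (random) label of the root of $T_2$, accessed only through the oracle $\mathcal{O}$. Let $\lambda$ be a real number such that the $2^{2n}\times 2^{2n}$ matrix $M$ defined from $G_n$ and $\lambda$ (as in the context) has full rank for every realization of $G_n$, and let $e_1$ be the standard unit vector indexed by the all-zero label. Let $\varepsilon>0$ and let $\mathcal{A}$ be a QIC algorithm for Linear Systems that, given $SQ(M)$ and $SQ(e_1)$ and precision $\varepsilon$, makes $T(M,\varepsilon)$ queries to $SQ(M)$ and outputs an index $i$ sampled with probability $\tilde{x}_i^2/\|\tilde{x}\|^2$ for a vector $\tilde{x}$ with $\|\tilde{x}-x\|\leq\varepsilon\|x\|$, where $x=M^{-1}e_1$. Then there is a classical algorithm for the game described in the context that makes at most $T(M,\varepsilon)+1$ queries to $\mathcal{O}$ and wins with probability at least $\tilde{x}_{i^\star}^2/\|\tilde{x}\|^2-2T(M,\varepsilon)2^{-2n}$.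
   Context: The graph $G_n$: take two perfect binary trees $T_1,T_2$, each of height $n$ (so each has $2^n$ leaves). Connect the leaves by a uniformly random alternating cycle: fix a leaf $\ell_1$ of $T_1$, connect it to a uniformly random leaf of $T_2$, connect that to a uniformly random remaining leaf of $T_1$, and so on, always alternating between the trees, finally closing the cycle back to $\ell_1$. The $N=2^{n+2}-2$ nodes receive uniformly random distinct $2n$-bit labels, except the root of $T_1$, which gets the all-zero label. The oracle $\mathcal{O}$: on a $2n$-bit query string $s$, it reports that no node has label $s$, or, if such a node exists, returns the labels of its neighbours. The game is won if $\mathcal{O}$ is ever queried with the label $i^\star$ of the root of $T_2$. The matrix $M$: rows and columns indexed by all $2n$-bit strings; on the $N\times N$ submatrix indexed by labels of nodes of $G_n$ it equals $\lambda I-A$, where $A$ is the adjacency matrix of $G_n$; each row/column indexed by a string that is not a node label has diagonal entry $\sqrt{\lambda^2+3}$ and all other entries $0$. $SQ$ access and QIC algorithms: $SQ(v)$ for a vector $v$ allows querying entries, querying $\|v\|$ (Euclidean norm), and sampling index $i$ with probability $v_i^2/\|v\|^2$; $SQ(M)$ for a matrix allows entry queries and $SQ$ access to every row, every column, the vector of row norms and the vector of column norms. A QIC algorithm for Linear Systems accesses its input only via $SQ(M)$ and $SQ(y)$ and outputs an index sampled with probability $\tilde{x}_i^2/\|\tilde{x}\|^2$ for some $\tilde{x}$ with $\|\tilde{x}-M^{-1}y\|\leq\varepsilon\|M^{-1}y\|$. *)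

From HB Require Import structures.
From mathcomp Require Import all_boot all_order all_fingroup all_algebra.
From mathcomp Require Import reals.
From Stdlib Require List.
Set Implicit Arguments. Unset Strict Implicit. Unset Printing Implicit Defensive.
Import Order.TTheory GRing.Theory Num.Theory.
Local Open Scope ring_scope.

(* Generic randomized query algorithms (finite decision trees).        *)
(*   Rnd m p k    : internal randomness: pick i : 'I_m with prob. p i  *)
Inductive alg (R : realType) (Q Ans Out : Type) : Type :=
  | Ret (o : Out)
  | Ask (q : Q) (k : Ans -> alg R Q Ans Out)
  | Rnd (m : nat) (p : 'I_m -> R) (k : 'I_m -> alg R Q Ans Out).
Arguments Ret {R Q Ans Out}.
Arguments Ask {R Q Ans Out}.
Arguments Rnd {R Q Ans Out}.

(* An oracle answers a query by a finitely supported distribution of answers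
   (a list of (answer, probability) pairs). *)
Definition oracle (R : realType) (Q Ans : Type) := Q -> seq (Ans * R).

Fixpoint valid_alg (R : realType) Q Ans Out (t : alg R Q Ans Out) : Prop :=
  match t with
  | Ret _ => True
  | Ask _ k => forall a, valid_alg (k a)
  | Rnd m p k => (forall i, 0 <= p i) /\ (\sum_(i < m) p i = 1)
                 /\ (forall i, valid_alg (k i))
  end.

(* Expected value of f(sequence of queries made, output) when running t
   against orc; h is the (reversed) history of queries made so far. *)
Fixpoint expect (R : realType) Q Ans Out (t : alg R Q Ans Out)
    (orc : oracle R Q Ans) (f : seq Q -> Out -> R) (h : seq Q) : R :=
  match t with
  | Ret o => f (rev h) o
  | Ask q k => \sum_(pa <- orc q) pa.2 * expect (k pa.1) orc f (q :: h)
  | Rnd m p k => \sum_(i < m) p i * expect (k i) orc f h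
  end.

(* On every execution of positive probability against orc, t makes at most
   b queries q with cnt q = true. *)
Fixpoint qbound (R : realType) Q Ans Out (t : alg R Q Ans Out)
    (orc : oracle R Q Ans) (cnt : Q -> bool) (b : nat) : Prop :=
  match t with
  | Ret _ => True
  | Ask q k => (if cnt q then is_true (0 < b)%N else True) /\
      (forall pa, List.In pa (orc q) -> 0 < pa.2 ->
         qbound (k pa.1) orc cnt (if cnt q then b.-1 else b))
  | Rnd m p k => forall i, 0 < p i -> qbound (k i) orc cnt b
  end.

(* Labels: 2n-bit strings, identified with 'I_(2^(2n)) via binary      *)
(* expansion; the all-zero string is 0.                                *)
Definition lbl (n : nat) := 'I_(2 ^ (2 * n)).
Lemma lbl_gt0 n : (0 < 2 ^ (2 * n))%N. Proof. by rewrite expn_gt0. Qed.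
Definition lab0 (n : nat) : lbl n := Ordinal (lbl_gt0 n).

(* Nodes: (b, k) with b = false for T_1, true for T_2, and k a heap    *)
(* index 0 .. 2^(n+1)-2 of a perfect binary tree of height n (children *)
(* of k are 2k+1 and 2k+2; root 0; leaves 2^n-1 .. 2^(n+1)-2).          *)
Definition tnode (n : nat) := 'I_(2 ^ n.+1 - 2).+1.
Definition node (n : nat) := (bool * tnode n)%type.
Definition root1 (n : nat) : node n := (false, ord0).
Definition root2 (n : nat) : node n := (true, ord0).

Definition tree_adj (n : nat) (u v : tnode n) : bool :=
  [|| (val v == (val u).*2.+1), (val v == (val u).*2.+2),
      (val u == (val v).*2.+1) | (val u == (val v).*2.+2)].

Definition is_leaf (n : nat) (u : tnode n) : bool := (2 ^ n - 1 <= val u)%N.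
Definition leaf_num (n : nat) (u : tnode n) : nat := (val u - (2 ^ n - 1))%N.

(* The random alternating cycle: a_i := T_1-leaf number (sigma i),
   b_i := T_2-leaf number (tau i), with a_0 = l_1 = T_1-leaf number 0; the
   cycle is a_0 b_0 a_1 b_1 ... a_{m-1} b_{m-1} a_0 (m = 2^n), i.e. edges
   {a_i, b_i} and {b_j, a_{(j+1) mod m}}. *)
Definition cyc_adj (n : nat) (sigma tau : {perm 'I_(2 ^ n)}) (x y : nat) : bool :=
  [exists i : 'I_(2 ^ n), (val (sigma i) == x) && (val (tau i) == y)] ||
  [exists i : 'I_(2 ^ n), [exists j : 'I_(2 ^ n),
      [&& val i == ((val j).+1 %% 2 ^ n)%N, val (sigma i) == x & val (tau j) == y]]].

Definition omega (n : nat) :=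
  ({perm 'I_(2 ^ n)} * {perm 'I_(2 ^ n)} * {ffun node n -> lbl n})%type.
Definition w_sigma n (w : omega n) := w.1.1.
Definition w_tau n (w : omega n) := w.1.2.
Definition w_lab n (w : omega n) := w.2.

(* admissible realizations; the distribution of G_n is uniform on them:
   sigma fixes position 0 (a_0 = l_1), tau arbitrary, labels injective and
   the root of T_1 labelled by the all-zero string. *)
Definition good (n : nat) (w : omega n) : bool :=
  [&& [forall i : 'I_(2 ^ n), (val i == 0%N) ==> (val (w_sigma w i) == 0%N)],
      injectiveb (w_lab w) & w_lab w (root1 n) == lab0 n].

Definition adj (n : nat) (w : omega n) (u v : node n) : bool :=
  ((u.1 == v.1) && tree_adj u.2 v.2) ||
  [&& u.1 != v.1, is_leaf u.2, is_leaf v.2 &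
      (if u.1 then cyc_adj (w_sigma w) (w_tau w) (leaf_num v.2) (leaf_num u.2)
       else cyc_adj (w_sigma w) (w_tau w) (leaf_num u.2) (leaf_num v.2))].

Definition is_label (n : nat) (w : omega n) (s : lbl n) : bool :=
  [exists v, w_lab w v == s].

(* adjacency matrix of G_n in label coordinates *)
Definition adjL (R : realType) (n : nat) (w : omega n) (s t : lbl n) : R :=
  ([exists u, exists v, [&& w_lab w u == s, w_lab w v == t & adj w u v]])%:R.

Definition istar (n : nat) (w : omega n) : lbl n := w_lab w (root2 n).

Definition Mmat (R : realType) (n : nat) (lam : R) (w : omega n) : 'M[R]_(2 ^ (2 * n)) :=
  \matrix_(s, t) (if is_label w s && is_label w t
                  then lam * (s == t)%:R - adjL R w s t
                  else if s == t then Num.sqrt (lam ^+ 2 + 3) else 0).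

Definition e1 (R : realType) (n : nat) : 'cV[R]_(2 ^ (2 * n)) :=
  \col_i (i == lab0 n)%:R.

Definition fnorm (R : realType) (D : nat) (v : 'I_D -> R) : R :=
  Num.sqrt (\sum_(i < D) v i ^+ 2).
Definition vnorm (R : realType) (D : nat) (v : 'cV[R]_D) : R := fnorm (fun i => v i 0).

(* Sample-and-query access SQ(M), SQ(y).                               *)
Inductive sq_query (D : nat) : Type :=
  (* SQ(M): entries *)
  | QM_entry (i j : 'I_D)
  (* SQ(row i of M): (entries via QM_entry), norm, sampling *)
  | QM_row_norm (i : 'I_D) | QM_row_sample (i : 'I_D)
  (* SQ(column j of M) *)
  | QM_col_norm (j : 'I_D) | QM_col_sample (j : 'I_D)
  (* SQ(vector of row norms) *)
  | QM_rnorms_entry (i : 'I_D) | QM_rnorms_norm | QM_rnorms_sample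
  (* SQ(vector of column norms) *)
  | QM_cnorms_entry (j : 'I_D) | QM_cnorms_norm | QM_cnorms_sample
  (* SQ(y) *)
  | Qy_entry (i : 'I_D) | Qy_norm | Qy_sample.

Inductive sq_ans (R : realType) (D : nat) : Type :=
  | AReal (r : R)
  | AIdx (i : 'I_D).

(* queries to SQ(M) (these are the ones counted) *)
Definition is_M_query (D : nat) (q : sq_query D) : bool :=
  match q with Qy_entry _ | Qy_norm | Qy_sample => false | _ => true end.

Definition det_ans (R : realType) (D : nat) (r : R) : seq (sq_ans R D * R) :=
  [:: (AReal D r, 1)].
Definition sample_ans (R : realType) (D : nat) (v : 'I_D -> R) : seq (sq_ans R D * R) :=
  [seq (AIdx R i, v i ^+ 2 / fnorm v ^+ 2) | i <- enum 'I_D].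

Definition sq_oracle (R : realType) (D : nat) (M : 'M[R]_D) (y : 'cV[R]_D)
    : oracle R (sq_query D) (sq_ans R D) :=
  let row_i i := fun j => M i j in
  let col_j j := fun i => M i j in
  let rn := fun i => fnorm (row_i i) in
  let cn := fun j => fnorm (col_j j) in
  fun q => match q with
  | QM_entry i j => det_ans D (M i j)
  | QM_row_norm i => det_ans D (rn i)
  | QM_row_sample i => sample_ans (row_i i)
  | QM_col_norm j => det_ans D (cn j)
  | QM_col_sample j => sample_ans (col_j j)
  | QM_rnorms_entry i => det_ans D (rn i)
  | QM_rnorms_norm => det_ans D (fnorm rn)
  | QM_rnorms_sample => sample_ans rn
  | QM_cnorms_entry j => det_ans D (cn j)
  | QM_cnorms_norm => det_ans D (fnorm cn)
  | QM_cnorms_sample => sample_ans cn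
  | Qy_entry i => det_ans D (y i 0)
  | Qy_norm => det_ans D (vnorm y)
  | Qy_sample => sample_ans (fun i => y i 0)
  end.

Definition out_prob (R : realType) (D : nat)
    (A : alg R (sq_query D) (sq_ans R D) 'I_D) (M : 'M[R]_D) (y : 'cV[R]_D)
    (i : 'I_D) : R :=
  expect A (sq_oracle M y) (fun _ o => (o == i)%:R) [::].

Definition game_answer (n : nat) (w : omega n) (s : lbl n) : option {set lbl n} :=
  match [pick v | w_lab w v == s] with
  | Some v => Some [set w_lab w u | u in [pred u | adj w v u]]
  | None => None
  end.

Definition game_oracle (R : realType) (n : nat) (w : omega n)
    : oracle R (lbl n) (option {set lbl n}) :=
  fun s => [:: (game_answer w s, 1)].

Definition avg (R : realType) (n : nat) (F : omega n -> R) : R :=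
  (\sum_(w | good w) F w) / #|[pred w : omega n | good w]|%:R.

(* probability (over G_n and B's coins) that B queries O with i* *)
Definition win_prob (R : realType) (n : nat)
    (B : alg R (lbl n) (option {set lbl n}) unit) : R :=
  avg (fun w => expect B (game_oracle R w) (fun qs _ => (istar w \in qs)%:R) [::]).

From Pilot Require Import Defs.
From HB Require Import structures.
From mathcomp Require Import all_boot all_order all_fingroup all_algebra.
From mathcomp Require Import reals.
From mathcomp Require Import zify ring lra.
From Stdlib Require List.
Import Order.TTheory GRing.Theory Num.Theory.

(* The game player B runs the linear-system algorithm A and answers its queries
   itself.  Row i of M (equally column i, as M is symmetric) is determined by the
   labels of the neighbours of the node labelled i, so a query to SQ(M) about
   index i costs one oracle query on i, and SQ(e_1) is known outright.  Since
   every node has degree 3 except the two roots, the squared row norms are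
   lam^2 + 3 - [s = 0] except at the unknown label i*, where they are one less.
   Their total is therefore known, and B replaces sampling from the row norms by
   sampling from the weights lam^2 + 3 - [s = 0] and querying the sample: this
   moves one unit of weight onto i*, where B has already won, so it cannot lower
   B's winning probability.  Finally B queries A's output.  Hence B makes T + 1
   queries and wins at least as often as A outputs i*. *)

Lemma sum_ord_eq K x : \sum_(k < K) (val k == x) = (x < K).
Proof.
rewrite -(big_mkord xpredT (fun k => nat_of_bool (k == x))).
elim: K => [|K IH]; first by rewrite big_geq.
by rewrite big_nat_recr //= IH; lia.
Qed.

Lemma sum_ord_mem K (s : seq nat) : uniq s ->
  \sum_(k < K) (val k \in s) = count (fun x => x < K) s.
Proof.
elim: s => [|x s IH] /=; first by rewrite big1.
move=> /andP[xNs s_uniq]; rewrite -IH // -sum_ord_eq -big_split /=.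
apply: eq_bigr => k _; rewrite inE; case: eqP => [->|//].
by rewrite (negbTE xNs).
Qed.

Section Tree.
Variable n : nat.

Definition tree_nbrs (a : nat) : seq nat :=
  [:: a.*2.+1, a.*2.+2 & if 0 < a then [:: a.-1./2] else [::]].

Lemma tree_nbrs_uniq a : uniq (tree_nbrs a).
Proof. by rewrite /tree_nbrs; case: ifP => /= _; rewrite !inE; lia. Qed.

Lemma tree_adjE (u v : tnode n) : tree_adj u v = (val v \in tree_nbrs (val u)).
Proof.
rewrite /tree_adj; have -> : (val u == (val v).*2.+1) || (val u == (val v).*2.+2) =
          (0 < val u) && (val v == (val u).-1./2).
  apply/idP/idP => [/orP[]/eqP->|/andP[? /eqP->]]; [lia | lia | apply/orP; lia].
by rewrite /tree_nbrs; case: ifP => /= u_gt0; rewrite !inE ?orbF ?orbA.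
Qed.

Lemma tree_adj_irr (u : tnode n) : tree_adj u u = false.
Proof. by rewrite /tree_adj; lia. Qed.

Lemma tree_adj_sym (u v : tnode n) : tree_adj u v = tree_adj v u.
Proof. by rewrite /tree_adj; lia. Qed.

(* The children 2u+1, 2u+2 exist exactly for internal nodes, the parent for u > 0. *)
Lemma tree_degree (u : tnode n) :
  \sum_(v : tnode n) tree_adj u v = (~~ is_leaf u).*2 + (0 < val u).
Proof.
under eq_bigr do rewrite tree_adjE.
rewrite sum_ord_mem ?tree_nbrs_uniq // /tree_nbrs /is_leaf.
have := ltn_ord u; have := expnS 2 n; have := expn_gt0 2 n.
by case: ifP => /= _; lia.
Qed.

End Tree.

Section Cycle.
Variables (n : nat) (s t : {perm 'I_(2 ^ n)}).

Lemma cyc_adj_l (x : 'I_(2 ^ n)) y :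
  cyc_adj s t x y = (y == t ((s^-1)%g x)) || (y == t (ord_pred ((s^-1)%g x))).
Proof.
rewrite /cyc_adj; congr orb.
- apply/existsP/eqP => [[i /andP[/eqP si /eqP <-]]|->].
    have -> : x = s i by apply: val_inj.
    by rewrite permK.
  by exists ((s^-1)%g x); rewrite permKV !eqxx.
- apply/existsP/eqP => [[i /existsP[j /and3P[/eqP ij /eqP si /eqP <-]]]|->].
    have -> : x = s i by apply: val_inj.
    by rewrite (_ : i = ordS j) ?permK ?ordSK //; apply: val_inj.
  exists ((s^-1)%g x); apply/existsP; exists (ord_pred ((s^-1)%g x)).
  by rewrite permKV !eqxx !andbT -[X in val X == _](ord_predK ((s^-1)%g x)).
Qed.

Lemma cyc_adj_r x (y : 'I_(2 ^ n)) :
  cyc_adj s t x y = (x == s ((t^-1)%g y)) || (x == s (ordS ((t^-1)%g y))).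
Proof.
rewrite /cyc_adj; congr orb.
- apply/existsP/eqP => [[i /andP[/eqP <- /eqP ti]]|->].
    have -> : y = t i by apply: val_inj.
    by rewrite permK.
  by exists ((t^-1)%g y); rewrite permKV !eqxx.
- apply/existsP/eqP => [[i /existsP[j /and3P[/eqP ij /eqP <- /eqP tj]]]|->].
    have -> : y = t j by apply: val_inj.
    by rewrite permK (_ : i = ordS j) //; apply: val_inj.
  exists (ordS ((t^-1)%g y)); apply/existsP; exists ((t^-1)%g y).
  by rewrite permKV !eqxx !andbT.
Qed.

End Cycle.

Lemma ordS_neq {m} (i : 'I_m) : 1 < m -> ordS i != i.
Proof.
move=> m_gt1; apply/eqP => /(congr1 val) /=.
have := ltn_ord i; case: (ltngtP i.+1 m) => [lt_im|//|eq_im].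
  by rewrite modn_small //; lia.
by rewrite eq_im modnn; lia.
Qed.

Section Degree.
Variables (n : nat) (w : omega n).

Lemma leaf_num_lt (u : tnode n) : leaf_num u < 2 ^ n.
Proof.
have := ltn_ord u; have := expnS 2 n; have : 0 < 2 ^ n by rewrite expn_gt0.
by rewrite /leaf_num -[val u]/(nat_of_ord u); lia.
Qed.

Lemma count_leaves2 (a b : 'I_(2 ^ n)) : a != b ->
  \sum_(u : tnode n) (is_leaf u && ((leaf_num u == a) || (leaf_num u == b))) = 2.
Proof.
move=> a_neq_b; have a_lt := ltn_ord a; have b_lt := ltn_ord b.
have a_neq_b' : nat_of_ord a != b by [].
have pow := expnS 2 n.
set leaves_ab := [:: a + (2 ^ n - 1); b + (2 ^ n - 1)].
rewrite (eq_bigr (fun u : tnode n => nat_of_bool (val u \in leaves_ab))).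
  rewrite (@sum_ord_mem (2 ^ n.+1 - 2).+1) /=; first lia.
  by rewrite inE andbT; lia.
by move=> u _; rewrite !inE /is_leaf /leaf_num; lia.
Qed.

(* The two cycle neighbours of a leaf are distinct because 2 ^ n > 1. *)
Lemma cross_degree b (u : tnode n) : 1 <= n ->
  \sum_(v : tnode n) adj w (b, u) (~~ b, v) = (is_leaf u).*2.
Proof.
move=> n_ge1; have two_le : 1 < 2 ^ n by rewrite -{1}(expn0 2) ltn_exp2l.
case: (boolP (is_leaf u)) => [u_leaf|u_int]; last first.
  by rewrite big1 // => v _; rewrite /adj (negbTE u_int); case: b.
set x : 'I_(2 ^ n) := Ordinal (leaf_num_lt u).
have adj_cross v : adj w (b, u) (~~ b, v) =
    is_leaf v && if b then cyc_adj (w_sigma w) (w_tau w) (leaf_num v) x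
                 else cyc_adj (w_sigma w) (w_tau w) x (leaf_num v).
  by rewrite /adj u_leaf; case: b.
under eq_bigr do rewrite adj_cross.
case: b {adj_cross}.
- under eq_bigr do rewrite cyc_adj_r.
  by rewrite count_leaves2 // (inj_eq perm_inj) eq_sym ordS_neq.
- under eq_bigr do rewrite cyc_adj_l.
  rewrite count_leaves2 // (inj_eq perm_inj); apply/eqP => /(congr1 (@ordS _)).
  by rewrite ord_predK => /eqP; rewrite (negbTE (ordS_neq _ two_le)).
Qed.

Lemma card_adj (v : node n) : 1 <= n ->
  #|[pred u | adj w v u]| = 3 - (val v.2 == 0).
Proof.
move=> n_ge1; rewrite -sum1_card big_mkcond /=.
rewrite -(pair_bigA _ (fun b (k : tnode n) => (adj w v (b, k) : nat))).
have same_tree b (u u' : tnode n) : adj w (b, u) (b, u') = tree_adj u u'.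
  by rewrite /adj eqxx /= orbF.
case: v => [[] u]; rewrite big_bool /=.
- under eq_bigr do rewrite same_tree.
  by rewrite tree_degree (cross_degree true u n_ge1); case: is_leaf => /=; lia.
- under [X in _ + X]eq_bigr do rewrite same_tree.
  by rewrite tree_degree (cross_degree false u n_ge1); case: is_leaf => /=; lia.
Qed.
End Degree.

Local Open Scope ring_scope.

Lemma In_nth (T : Type) (x0 : T) (s : seq T) i : (i < size s)%N -> List.In (nth x0 s i) s.
Proof. by elim: s i => [|x s IH] [|i] //= i_lt; [left | right; apply: IH]. Qed.

Lemma In_map_mem (T : eqType) (U : Type) (f : T -> U) (s : seq T) x :
  x \in s -> List.In (f x) (map f s).
Proof.
elim: s => [|y s IH] //=; rewrite inE => /orP[/eqP ->|x_s]; first by left.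
by right; apply: IH.
Qed.

Lemma convex_comb_ge0_le1 (R : numDomainType) (I : finType) (p x : I -> R) :
  (forall i, 0 <= p i) -> \sum_i p i = 1 -> (forall i, 0 <= x i <= 1) ->
  0 <= \sum_i p i * x i <= 1.
Proof.
move=> p_ge0 p_sum x01; apply/andP; split.
  by apply: sumr_ge0 => i _; rewrite mulr_ge0 //; case/andP: (x01 i).
by rewrite -p_sum; apply: ler_sum => i _; apply: ler_piMr => //; case/andP: (x01 i).
Qed.

Section Algorithms.
Context {R : realType} {Q Ans : Type}.
Implicit Types (orc : oracle R Q Ans) (cnt : Q -> bool).

Definition is_distr {A : Type} (L : seq (A * R)) : bool :=
  all (fun pa => 0 <= pa.2) L && (\sum_(pa <- L) pa.2 == 1).

(* Aborts when [L] is not a probability distribution. *)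
Definition draw {A : Type} (L : seq (A * R)) (k : A -> alg R Q Ans unit) : alg R Q Ans unit :=
  if is_distr L then
    Rnd (size L) (fun j => (tnth (in_tuple L) j).2) (fun j => k (tnth (in_tuple L) j).1)
  else Ret tt.

Lemma valid_draw {A} (L : seq (A * R)) k :
  (forall a, valid_alg (k a)) -> valid_alg (draw L k).
Proof.
move=> k_valid; rewrite /draw; case: ifP => //.
move=> /andP[/(all_tnthP (t := in_tuple L)) L_ge0 /eqP L_sum].
by do 2 split => //; rewrite -L_sum [RHS]big_tnth.
Qed.

Lemma qbound_draw {A} (L : seq (A * R)) k orc cnt b :
  (forall pa, List.In pa L -> 0 < pa.2 -> qbound (k pa.1) orc cnt b) ->
  qbound (draw L k) orc cnt b.
Proof.
move=> k_bound; rewrite /draw; case: ifP => //= _ j p_j; apply: k_bound => //.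
by rewrite (tnth_nth (tnth (in_tuple L) j)); apply: In_nth.
Qed.

Lemma expect_draw {A} (Y : A -> R) (L : seq (A * R)) k orc f h :
  is_distr L || all (fun pa => pa.2 == 0) L -> (forall qs, 0 <= f qs tt) ->
  (forall a, Y a <= expect (k a) orc f h) ->
  \sum_(pa <- L) pa.2 * Y pa.1 <= expect (draw L k) orc f h.
Proof.
move=> /orP[L_distr|/(all_tnthP (t := in_tuple L)) L_0] f_ge0 Y_le; rewrite /draw big_tnth.
  rewrite L_distr /=; apply: ler_sum => j _; apply: ler_wpM2l (Y_le _).
  by case/andP: L_distr => /(all_tnthP (t := in_tuple L)).
rewrite big1 => [|j _]; last by rewrite (eqP (L_0 j)) mul0r.
case: ifP => _ /=; last exact: f_ge0.
by apply: sumr_ge0 => j _; rewrite (eqP (L_0 j)) mul0r.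
Qed.

Lemma qbound_mono {Out} (t : alg R Q Ans Out) orc cnt b b' :
  (b <= b')%N -> qbound t orc cnt b -> qbound t orc cnt b'.
Proof.
elim: t b b' => [o|q k IH|m p k IH] b b' le_bb' /=; first by [].
- case: (cnt q) => -[b_pos k_bound]; split=> [|pa pa_in pa_pos].
  + exact: leq_trans le_bb'.
  + by apply: IH (k_bound _ pa_in pa_pos); rewrite -!subn1 leq_sub2r.
  + by [].
  + exact: IH (k_bound _ pa_in pa_pos).
- by move=> k_bound i p_i; apply: IH (k_bound i p_i).
Qed.

Lemma expect_ge0_le1 {Out} {orc f} {t : alg R Q Ans Out} h :
  (forall q, is_distr (orc q)) -> (forall qs o, 0 <= f qs o <= 1) -> valid_alg t ->
  0 <= expect t orc f h <= 1.
Proof.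
move=> orc_distr f01; elim: t h => [o|q k IH|m p k IH] h /=; first by move=> _; apply: f01.
- move=> k_valid; have /andP[/(all_tnthP (t := in_tuple (orc q))) q_ge0 /eqP q_sum] := orc_distr q.
  rewrite big_tnth in q_sum; rewrite big_tnth; apply: convex_comb_ge0_le1 => // j.
  exact: IH.
- by move=> [p_ge0 [p_sum k_valid]]; apply: convex_comb_ge0_le1 => // i; apply: IH.
Qed.

End Algorithms.

Lemma expect_hit {R : realType} {Q : eqType} {Ans Out : Type} (t : alg R Q Ans Out)
    (orc : oracle R Q Ans) (x : Q) (h : seq Q) :
  (forall q, is_distr (orc q)) -> valid_alg t -> x \in h ->
  expect t orc (fun qs _ => (x \in qs)%:R) h = 1.
Proof.
move=> orc_distr; elim: t h => [o|q k IH|m p k IH] h /=.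
- by move=> _ x_h; rewrite mem_rev x_h.
- move=> k_valid x_h; have /andP[_ /eqP q_sum] := orc_distr q.
  rewrite -[RHS]q_sum; apply: eq_bigr => pa _.
  by rewrite IH ?mulr1 // inE x_h orbT.
- move=> [_ [p_sum k_valid]] x_h; rewrite -[RHS]p_sum; apply: eq_bigr => i _.
  by rewrite IH ?mulr1.
Qed.

(* Moving one unit of weight off the index where [X] is maximal can only lower
   the weighted average, even after replacing [X] by a smaller [Y]. *)
Lemma wavg_remove_unit_le (R : realFieldType) (I : finType) (wt X Y : I -> R) (i0 : I) :
  (forall i, 0 <= wt i - (i == i0)%:R) -> 1 < \sum_i wt i ->
  (forall i, Y i <= X i <= 1) -> X i0 = 1 ->
  \sum_i (wt i - (i == i0)%:R) / (\sum_j wt j - 1) * Y i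
    <= \sum_i wt i / (\sum_j wt j) * X i.
Proof.
move=> wt_ge Z_gt1 YX1 X_i0; set Z := \sum_j wt j in Z_gt1 *.
have wt_ge0 i : 0 <= wt i by have := wt_ge i; case: (i == i0) => /=; lra.
set V := \sum_i wt i * X i.
have V_le_Z : V <= Z by apply: ler_sum => i _; apply: ler_piMr => //; case/andP: (YX1 i).
apply: (@le_trans _ _ (\sum_i (wt i - (i == i0)%:R) / (Z - 1) * X i)).
  apply: ler_sum => i _; apply: ler_wpM2l; first by rewrite divr_ge0 // subr_ge0 ltW.
  by case/andP: (YX1 i).
have -> : \sum_i (wt i - (i == i0)%:R) / (Z - 1) * X i = (V - 1) / (Z - 1).
  under eq_bigr do rewrite mulrAC mulrBl.
  rewrite -mulr_suml sumrB; congr ((_ - _) / _).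
  by rewrite (bigD1 i0) //= eqxx mul1r X_i0 big1 ?addr0 // => i /negbTE ->; rewrite mul0r.
have -> : \sum_i wt i / Z * X i = V / Z by rewrite mulr_suml; apply: eq_bigr => i _; rewrite mulrAC.
have -> : V / Z = (V - 1) / (Z - 1) + (Z - V) / (Z * (Z - 1)).
  by field; apply/andP; split; apply/eqP; lra.
by rewrite lerDl divr_ge0 ?mulr_ge0; lra.
Qed.

Lemma fnorm_sq {R : realType} {D : nat} (v : 'I_D -> R) : fnorm v ^+ 2 = \sum_i v i ^+ 2.
Proof. by rewrite /fnorm sqr_sqrtr // sumr_ge0 // => i _; rewrite sqr_ge0. Qed.

Lemma eq_fnorm {R : realType} {D : nat} {u v : 'I_D -> R} : u =1 v -> fnorm u = fnorm v.
Proof. by move=> uv; rewrite /fnorm; under eq_bigr do rewrite uv. Qed.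

Lemma eq_sample_ans {R : realType} {D : nat} {u v : 'I_D -> R} :
  u =1 v -> sample_ans u = sample_ans v.
Proof. by move=> uv; rewrite /sample_ans (eq_fnorm uv); apply: eq_map => i; rewrite uv. Qed.

Lemma big_sample_ans {R : realType} {D : nat} (v : 'I_D -> R) (Y : sq_ans R D -> R) :
  \sum_(pa <- sample_ans v) pa.2 * Y pa.1 = \sum_i v i ^+ 2 / fnorm v ^+ 2 * Y (AIdx R i).
Proof. by rewrite /sample_ans big_map big_enum. Qed.

Lemma In_sample_ans {R : realType} {D : nat} (v : 'I_D -> R) i :
  List.In (AIdx R i, v i ^+ 2 / fnorm v ^+ 2) (sample_ans v).
Proof.
rewrite /sample_ans; apply: (@In_map_mem _ _ (fun j => (AIdx R j, v j ^+ 2 / fnorm v ^+ 2))).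
by rewrite mem_enum.
Qed.

(* A zero vector yields the all-zero "distribution", hence the disjunction. *)
Lemma sample_ans_distr {R : realType} {D : nat} (v : 'I_D -> R) :
  is_distr (sample_ans v) || all (fun pa => pa.2 == 0) (sample_ans v).
Proof.
rewrite /is_distr /sample_ans !all_map; have [v0|v_neq0] := eqVneq (fnorm v) 0.
  by apply/orP; right; apply/allP => i _ /=; rewrite v0 expr0n invr0 mulr0.
apply/orP; left; apply/andP; split.
  by apply/allP => i _ /=; rewrite divr_ge0 ?sqr_ge0.
rewrite big_map big_enum /= -mulr_suml -fnorm_sq divff //.
by rewrite expf_neq0.
Qed.

Lemma sq_oracle_distr {R : realType} {D : nat} (M : 'M[R]_D) (y : 'cV[R]_D) q :
  is_distr (sq_oracle M y q) || all (fun pa => pa.2 == 0) (sq_oracle M y q).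
Proof.
have det_distr r : is_distr (det_ans D r) by rewrite /is_distr /= big_seq1 ler01 eqxx.
by case: q => * /=; rewrite ?det_distr ?sample_ans_distr.
Qed.

Lemma game_oracle_distr {R : realType} {n : nat} (w : omega n) s :
  is_distr (game_oracle R w s).
Proof. by rewrite /is_distr /= big_seq1 ler01 eqxx. Qed.

Lemma sum_indicator {R : pzSemiRingType} {T : finType} (S : {set T}) :
  \sum_t ((t \in S)%:R : R) = #|S|%:R.
Proof. by rewrite -sum1_card natr_sum [RHS]big_mkcond; apply: eq_bigr => t _; case: (t \in S). Qed.

Definition nbr_labels {n : nat} (w : omega n) (v : node n) : {set lbl n} :=
  [set w_lab w u | u in [pred u | adj w v u]].

Section Graph.
Context {n : nat} {w : omega n}.

Lemma adj_irr u : adj w u u = false.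
Proof. by rewrite /adj eqxx tree_adj_irr. Qed.

Lemma adj_sym u v : adj w u v = adj w v u.
Proof.
rewrite /adj eq_sym tree_adj_sym; congr orb.
by case: u v => [[] ku] [[] kv] //=; rewrite andbCA.
Qed.

Lemma is_label_lab v : is_label w (w_lab w v).
Proof. by apply/existsP; exists v. Qed.

Variant game_answer_spec (s : lbl n) : option {set lbl n} -> bool -> Prop :=
  | GameLabel v of s = w_lab w v : game_answer_spec s (Some (nbr_labels w v)) true
  | GameNoLabel of (forall v, w_lab w v != s) : game_answer_spec s None false.

Lemma game_answerP s : game_answer_spec s (game_answer w s) (is_label w s).
Proof.
rewrite /game_answer; case: pickP => [v /eqP <-|no_v]; first by rewrite is_label_lab; constructor.
have -> : is_label w s = false by apply/existsP => -[v]; rewrite no_v.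
by constructor => v; rewrite no_v.
Qed.

Hypothesis w_good : good w.

Lemma lab_inj : injective (w_lab w).
Proof. by case/and3P: w_good => _ /injectiveP. Qed.

Lemma lab_root1 : w_lab w (Defs.root1 n) = lab0 n.
Proof. by case/and3P: w_good => _ _ /eqP. Qed.

Lemma lab_notin_nbr_labels v : w_lab w v \notin nbr_labels w v.
Proof. by apply/imsetP => -[u vu /lab_inj eq_vu]; move: vu; rewrite inE -eq_vu adj_irr. Qed.

Lemma adjL_lab {R : realType} v t : adjL R w (w_lab w v) t = (t \in nbr_labels w v)%:R.
Proof.
rewrite /adjL; congr (nat_of_bool _)%:R; apply/existsP/imsetP.
  by move=> [u /existsP[u' /and3P[/eqP/lab_inj -> /eqP <- vu']]]; exists u'.
by move=> [u' vu' ->]; exists v; apply/existsP; exists u'; rewrite !eqxx.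
Qed.

End Graph.

Section Rows.
Context {R : realType} {n : nat} (lam : R).

Definition row_weight (s : lbl n) : R := lam ^+ 2 + 3 - (s == lab0 n)%:R.
Definition total_weight : R := \sum_(s : lbl n) row_weight s.

Lemma row_weight_ge s : lam ^+ 2 + 2 <= row_weight s.
Proof. by rewrite /row_weight; case: (s == lab0 n) => /=; lra. Qed.

Lemma total_weight_gt1 : 1 < total_weight.
Proof.
rewrite /total_weight (bigD1 (lab0 n)) //=; have := row_weight_ge (lab0 n).
have : 0 <= \sum_(s | s != lab0 n) row_weight s.
  by apply: sumr_ge0 => s _; have := row_weight_ge s; have := sqr_ge0 lam; lra.
by have := sqr_ge0 lam; lra.
Qed.

Lemma row_weight_distr :
  (forall s, 0 <= row_weight s / total_weight) /\ \sum_s row_weight s / total_weight = 1.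
Proof.
have Z_gt0 : 0 < total_weight by apply: lt_trans total_weight_gt1.
split; last by rewrite -mulr_suml divff // gt_eqF.
move=> s; rewrite divr_ge0 ?ltW //.
by have := row_weight_ge s; have := sqr_ge0 lam; lra.
Qed.

Definition row_of_answer (i : lbl n) (a : option {set lbl n}) (j : lbl n) : R :=
  if a is Some B then (if j == i then lam else - (j \in B)%:R)
  else if j == i then Num.sqrt (lam ^+ 2 + 3) else 0.

Lemma row_of_answer_sq_some i (B : {set lbl n}) : i \notin B ->
  \sum_j row_of_answer i (Some B) j ^+ 2 = lam ^+ 2 + #|B|%:R.
Proof.
move=> iNB; rewrite (eq_bigr (fun j => (if j == i then lam ^+ 2 else 0) + (j \in B)%:R)) => [|j _].
  by rewrite big_split /= -big_mkcond big_pred1_eq sum_indicator.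
rewrite /row_of_answer; case: eqVneq => [->|_]; first by rewrite (negbTE iNB) addr0.
by rewrite add0r; case: (j \in B); rewrite ?sqrrN ?expr1n ?oppr0 ?expr0n.
Qed.

Lemma row_of_answer_sq_none i : \sum_j row_of_answer i None j ^+ 2 = lam ^+ 2 + 3.
Proof.
rewrite (eq_bigr (fun j => if j == i then lam ^+ 2 + 3 else 0)) => [|j _].
  by rewrite -big_mkcond big_pred1_eq.
by rewrite /row_of_answer; case: eqP; rewrite ?sqr_sqrtr ?addr_ge0 ?sqr_ge0 ?expr0n.
Qed.

End Rows.
Arguments total_weight {R} n lam.

Section Matrix.
Context {R : realType} {n : nat} (lam : R) {w : omega n}.
Hypotheses (n_ge1 : (1 <= n)%N) (w_good : good w).
Local Notation M := (Mmat lam w).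

Lemma Mmat_row_of_answer i j : row_of_answer lam i (game_answer w i) j = M i j.
Proof.
rewrite mxE; case: game_answerP => [v ->|_]; last by rewrite /= eq_sym.
rewrite /row_of_answer adjL_lab //; case: eqVneq => [->|j_neq].
  by rewrite is_label_lab (negbTE (lab_notin_nbr_labels w_good v)) mulr1 subr0.
rewrite mulr0 sub0r; case: (boolP (is_label w j)) => // j_nolab.
suff /negbTE -> : j \notin nbr_labels w v by rewrite oppr0.
by apply/imsetP => -[u _ j_lab]; rewrite j_lab is_label_lab in j_nolab.
Qed.

Lemma Mmat_sym i j : M i j = M j i.
Proof.
rewrite !mxE andbC [j == i]eq_sym; congr (if _ then _ - _ else _).
rewrite /adjL; congr (nat_of_bool _)%:R.
by apply/existsP/existsP => -[u /existsP[v /and3P[? ? ?]]];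
  exists v; apply/existsP; exists u; rewrite adj_sym; apply/and3P.
Qed.

Lemma row_norm2 s : fnorm (fun t => M s t) ^+ 2 = row_weight lam s - (s == istar w)%:R.
Proof.
rewrite fnorm_sq; under eq_bigr do rewrite -Mmat_row_of_answer.
rewrite /row_weight /istar -(lab_root1 w_good).
case: game_answerP => [v ->|no_lab]; last first.
  by rewrite row_of_answer_sq_none !(eq_sym s) !(negbTE (no_lab _)) !subr0.
rewrite row_of_answer_sq_some ?lab_notin_nbr_labels // /nbr_labels card_imset ?card_adj //;
  last exact: lab_inj.
rewrite !(inj_eq (lab_inj w_good)); case: v => [b k] /=.
rewrite /Defs.root1 /root2 !xpair_eqE -[val k == 0%N]/(k == ord0).
by case: b; case: (k == ord0); rewrite /= ?subn0 ?subn1 /=; lra.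
Qed.

Lemma rownorms_norm2 : fnorm (fun s => fnorm (fun t => M s t)) ^+ 2 = total_weight n lam - 1.
Proof.
rewrite fnorm_sq; under eq_bigr do rewrite row_norm2.
rewrite sumrB; congr (_ - _); rewrite (eq_bigr (fun s => (s \in [set istar w])%:R)) => [|s _].
  by rewrite sum_indicator cards1.
by rewrite in_set1.
Qed.

Lemma rownorms_norm :
  fnorm (fun s => fnorm (fun t => M s t)) = Num.sqrt (total_weight n lam - 1).
Proof. by rewrite -rownorms_norm2 sqrtr_sqr ger0_norm // sqrtr_ge0. Qed.

Lemma sample_rownorms_gt0 s :
  0 < fnorm (fun t => M s t) ^+ 2 / fnorm (fun s => fnorm (fun t => M s t)) ^+ 2.
Proof.
have Z_gt1 := total_weight_gt1 lam (n := n).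
rewrite row_norm2 rownorms_norm2 divr_gt0 ?subr_gt0 //.
by have := row_weight_ge lam s; have := sqr_ge0 lam; case: (s == istar w) => /=; lra.
Qed.

End Matrix.

Section Simulation.
Context {R : realType} {n : nat} (lam : R).
Local Notation D := (2 ^ (2 * n))%N.
Local Notation algA := (alg R (sq_query D) (sq_ans R D) (lbl n)).
Local Notation algB := (alg R (lbl n) (option {set lbl n}) unit).

(* How B answers a query of A: the answer distribution is either [Known] without
   querying the oracle, or a function of the oracle's answer on one [Probe]d
   label; [NormSample], sampling from the row norms, is handled separately. *)
Inductive answer_plan :=
  | Known of seq (sq_ans R D * R)
  | Probe of lbl n & (option {set lbl n} -> seq (sq_ans R D * R))
  | NormSample.

Definition plan_of (q : sq_query D) : answer_plan :=
  let row i a := row_of_answer lam i a in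
  match q with
  | QM_entry i j => Probe i (fun a => det_ans D (row i a j))
  | QM_row_norm i | QM_col_norm i | QM_rnorms_entry i | QM_cnorms_entry i =>
      Probe i (fun a => det_ans D (fnorm (row i a)))
  | QM_row_sample i | QM_col_sample i => Probe i (fun a => sample_ans (row i a))
  | QM_rnorms_norm | QM_cnorms_norm => Known (det_ans D (Num.sqrt (total_weight n lam - 1)))
  | QM_rnorms_sample | QM_cnorms_sample => NormSample
  | Qy_entry _ | Qy_norm | Qy_sample => Known (sq_oracle 0 (e1 R n) q)
  end.

Fixpoint simulate (t : algA) : algB :=
  match t with
  | Ret o => Ask o (fun _ => Ret tt)
  | Ask q k =>
      match plan_of q with
      | Known L => draw L (fun a => simulate (k a))
      | Probe i L => Ask i (fun g => draw (L g) (fun a => simulate (k a)))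
      | NormSample => Rnd D (fun s => row_weight lam s / total_weight n lam)
                        (fun s => Ask s (fun _ => simulate (k (AIdx R s))))
      end
  | Rnd m p k => Rnd m p (fun i => simulate (k i))
  end.

Lemma valid_simulate {t : algA} : valid_alg t -> valid_alg (simulate t).
Proof.
elim: t => [o|q k IH|m p k IH] //=.
- move=> k_valid; case: (plan_of q) => [L|i L|] /=.
  + by apply: valid_draw => a; apply: IH.
  + by move=> g; apply: valid_draw => a; apply: IH.
  + case: (row_weight_distr lam (n := n)) => p_ge0 p_sum.
    by split=> //; split=> // s g; apply: IH.
- by move=> [p_ge0 [p_sum k_valid]]; split=> //; split=> // i; apply: IH.
Qed.

Variable w : omega n.
Hypotheses (n_ge1 : (1 <= n)%N) (w_good : good w).
Local Notation sqO := (sq_oracle (Mmat lam w) (e1 R n)).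
Local Notation rownorms := (fun i => fnorm (fun j => Mmat lam w i j)).

Variant plan_spec (q : sq_query D) : answer_plan -> Prop :=
  | KnownSpec L of L = sqO q : plan_spec q (Known L)
  | ProbeSpec i L of L (game_answer w i) = sqO q & is_M_query q : plan_spec q (Probe i L)
  | NormSampleSpec of sqO q = sample_ans rownorms & is_M_query q : plan_spec q NormSample.

Lemma plan_ofP q : plan_spec q (plan_of q).
Proof.
have row i : row_of_answer lam i (game_answer w i) =1 (fun j => Mmat lam w i j).
  exact: Mmat_row_of_answer.
have col j : row_of_answer lam j (game_answer w j) =1 (fun i => Mmat lam w i j).
  by move=> i; rewrite Mmat_row_of_answer // Mmat_sym.
have cn_rn : (fun j => fnorm (fun i => Mmat lam w i j)) =1 rownorms.
  by move=> j; apply: eq_fnorm => i; apply: Mmat_sym.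
case: q => [i j|i|i|j|j|i| | |j| | |i| |]; constructor => //=.
- by rewrite row.
- by rewrite (eq_fnorm (row i)).
- by rewrite (eq_sample_ans (row i)).
- by rewrite (eq_fnorm (col j)).
- by rewrite (eq_sample_ans (col j)).
- by rewrite (eq_fnorm (row i)).
- by rewrite rownorms_norm.
- by rewrite (eq_fnorm (col j)).
- by rewrite (eq_fnorm cn_rn) rownorms_norm.
- exact: eq_sample_ans cn_rn.
Qed.

Lemma expect_simulate (t : algA) : valid_alg t -> forall h h',
  expect t sqO (fun _ o => (o == istar w)%:R) h'
    <= expect (simulate t) (game_oracle R w) (fun qs _ => (istar w \in qs)%:R) h.
Proof.
have hit01 (qs : seq (lbl n)) (u : unit) : 0 <= ((istar w \in qs)%:R : R) <= 1.
  by case: (_ \in _); rewrite ?lexx ?ler01.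
elim: t => [o|q k IH|m p k IH] /= t_valid h h'.
- by rewrite big_seq1 mul1r mem_rev inE eq_sym; case: (_ == _) => /=; rewrite ?lexx ?ler0n.
- case: plan_ofP => [L ->|i L EL _|EL _] /=.
  + apply: (expect_draw (fun a => expect (k a) sqO _ (q :: h'))) => // [|a].
      exact: sq_oracle_distr.
    exact: IH.
  + rewrite big_seq1 mul1r -EL.
    apply: (expect_draw (fun a => expect (k a) sqO _ (q :: h'))) => // [|a].
      by rewrite EL; exact: sq_oracle_distr.
    exact: IH.
  + have Z_gt1 := total_weight_gt1 lam (n := n).
    rewrite EL (big_sample_ans _ (fun a => expect (k a) sqO _ (q :: h'))).
    rewrite rownorms_norm2 //.
    under [X in X <= _]eq_bigr do rewrite row_norm2 //.
    under [X in _ <= X]eq_bigr do rewrite big_seq1 mul1r.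
    apply: wavg_remove_unit_le => // [s|s|].
    * by have := row_weight_ge lam s; have := sqr_ge0 lam; case: (s == istar w) => /=; lra.
    * apply/andP; split; first exact: IH.
      have /andP[//] := expect_ge0_le1 (s :: h) (game_oracle_distr w) hit01
        (valid_simulate (t_valid (AIdx R s))).
    * apply: expect_hit; rewrite ?inE ?eqxx //; first exact: game_oracle_distr.
      exact: valid_simulate.
- move: t_valid => [p_ge0 [_ k_valid]]; apply: ler_sum => i _.
  by apply: ler_wpM2l => //; apply: IH.
Qed.

Lemma qbound_simulate (t : algA) b :
  qbound t sqO (@is_M_query D) b -> qbound (simulate t) (game_oracle R w) (fun _ => true) b.+1.
Proof.
elim: t b => [o|q k IH|m p k IH] b /=.
- by move=> _; split=> // pa [<-|[]].
- case: plan_ofP => [L ->|i L EL M_q|EL M_q] /= [b_pos k_bound].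
  + apply: qbound_draw => pa pa_in pa_pos; apply: qbound_mono (IH _ _ (k_bound _ pa_in pa_pos)).
    by case: is_M_query; rewrite // ltnS leq_pred.
  + rewrite M_q in b_pos k_bound; split=> // _ [<-|[]] _ /=.
    apply: qbound_draw => pa pa_in pa_pos; rewrite -(prednK b_pos); apply: IH.
    by apply: k_bound; rewrite // -EL.
  + rewrite M_q in b_pos k_bound => s _; split=> // _ [<-|[]] _ /=.
    rewrite -(prednK b_pos); apply: IH; apply: (k_bound (AIdx R s, _)).
      by rewrite EL; apply: In_sample_ans.
    exact: sample_rownorms_gt0.
- by move=> k_bound i p_pos; apply: IH; apply: k_bound.
Qed.

End Simulation.

Lemma ler_avg {R : realType} {n : nat} (F G : omega n -> R) :
  (forall w, good w -> F w <= G w) -> avg F <= avg G.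
Proof. by move=> FG; rewrite /avg ler_wpM2r ?invr_ge0 ?ler0n //; apply: ler_sum. Qed.

Theorem mainTheorem3 (R : realType) (n : nat) (lam eps : R) (T : nat)
    (A : alg R (sq_query (2 ^ (2 * n))) (sq_ans R (2 ^ (2 * n))) (lbl n))
    (xt : omega n -> 'cV[R]_(2 ^ (2 * n))) :
  (1 <= n)%N ->
  (forall w : omega n, good w -> \rank (Mmat lam w) = (2 ^ (2 * n))%N) ->
  0 < eps ->
  valid_alg A ->
  (forall w : omega n, good w ->
     qbound A (sq_oracle (Mmat lam w) (e1 R n)) (@is_M_query _) T) ->
  (forall w : omega n, good w ->
     vnorm (xt w - invmx (Mmat lam w) *m e1 R n)
       <= eps * vnorm (invmx (Mmat lam w) *m e1 R n)) ->
  (forall w : omega n, good w -> forall i : lbl n,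
     out_prob A (Mmat lam w) (e1 R n) i = xt w i 0 ^+ 2 / vnorm (xt w) ^+ 2) ->
  exists B : alg R (lbl n) (option {set lbl n}) unit,
    [/\ valid_alg B,
        (forall w : omega n, good w -> qbound B (game_oracle R w) (fun _ => true) T.+1) &
        win_prob B >= avg (fun w => xt w (istar w) 0 ^+ 2 / vnorm (xt w) ^+ 2)
                       - 2 * T%:R / (2 ^ (2 * n))%:R].
Proof.
move=> n_ge1 _ _ A_valid A_bound _ A_out.
exists (simulate lam A); split.
- exact: valid_simulate.
- by move=> w w_good; apply: qbound_simulate (A_bound w w_good).
- apply: (@le_trans _ _ (avg (fun w => xt w (istar w) 0 ^+ 2 / vnorm (xt w) ^+ 2))).
    by rewrite gerBl divr_ge0 ?mulr_ge0 ?ler0n.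
  by apply: ler_avg => w w_good; rewrite -A_out //; apply: expect_simulate.
Qed.
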